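(* Let $\Omega,\epsilon\in\mathbb{R}$ and $T\ge 0$. On a qubit $\mathbb{C}^2$ with basis $\{|0\rangle,|1\rangle\}$, let $\Phi_T^\epsilon$ be the quantum channel mapping $\rho(0)\mapsto\rho(T)$, where $\rho(t)$ solves $$\dot\rho=-i\frac{\Omega+\epsilon}{2}[\sigma_z,\rho]+\Big(\sigma_-\rho\sigma_+-\tfrac12\{\sigma_+\sigma_-,\rho\}\Big)+\Big(\sigma_+\rho\sigma_--\tfrac12\{\sigma_-\sigma_+,\rho\}\Big),$$ with $\sigma_+=|1\rangle\langle 0|$, $\sigma_-=\sigma_+^\dagger$, $\sigma_z$ the Pauli $z$ matrix. Then for every qubit density operator $\rho$, $$G_{\mathrm{ch}}(\Phi_T^0,\Phi_T^\epsilon;\rho)=1-2e^{-2T}\big(1-\cos(\epsilon T)\big)\rho_{00}\rho_{11},$$ where $\rho_{kk}=\langle k|\rho|k\rangle$.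
   Context: Superfidelity: $G(\rho_1,\rho_2)=\operatorname{Tr}(\rho_1\rho_2)+\sqrt{1-\operatorname{Tr}\rho_1^2}\sqrt{1-\operatorname{Tr}\rho_2^2}$. Channel superfidelity of channels $\Phi,\Psi$ on $\mathcal{L}(\mathcal{X})$ at $\sigma\in\mathcal{D}(\mathcal{X})$: $G_{\mathrm{ch}}(\Phi,\Psi;\sigma)=\inf G\big((\Phi\otimes\mathbb{1}_{\mathcal{L}(\mathcal{Z})})(\xi),(\Psi\otimes\mathbb{1}_{\mathcal{L}(\mathcal{Z})})(\xi)\big)$ over all finite-dimensional $\mathcal{Z}$ and all pure states $\xi$ on $\mathcal{X}\otimes\mathcal{Z}$ with $\operatorname{Tr}_{\mathcal{Z}}\xi=\sigma$. $\{A,B\}=AB+BA$. *)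

(* classical reals, complex numbers as pairs of reals,
   finite matrices as functions nat -> nat -> C (only indices < n matter). *)
From Stdlib Require Import Reals.
Open Scope R_scope.

Record C := mkC { Re : R ; Im : R }.
Definition C0 : C := mkC 0 0.
Definition C1 : C := mkC 1 0.
Definition Ci : C := mkC 0 1.
Definition RtoC (r : R) : C := mkC r 0.
Definition Cadd (z w : C) : C := mkC (Re z + Re w) (Im z + Im w).
Definition Copp (z : C) : C := mkC (- Re z) (- Im z).
Definition Cmul (z w : C) : C :=
  mkC (Re z * Re w - Im z * Im w) (Re z * Im w + Im z * Re w).
Definition Cconj (z : C) : C := mkC (Re z) (- Im z).

Definition Mat := nat -> nat -> C.

Fixpoint csum (n : nat) (f : nat -> C) : C :=
  match n with O => C0 | S k => Cadd (csum k f) (f k) end.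

Definition mmul (n : nat) (A B : Mat) : Mat :=
  fun i j => csum n (fun k => Cmul (A i k) (B k j)).
Definition madd (A B : Mat) : Mat := fun i j => Cadd (A i j) (B i j).
Definition mscale (c : C) (A : Mat) : Mat := fun i j => Cmul c (A i j).
Definition msub (A B : Mat) : Mat := madd A (mscale (Copp C1) B).
Definition trace (n : nat) (A : Mat) : C := csum n (fun i => A i i).

Definition hermitian (n : nat) (A : Mat) : Prop :=
  forall i j, (i < n)%nat -> (j < n)%nat -> A i j = Cconj (A j i).
Definition psd (n : nat) (A : Mat) : Prop :=
  forall v : nat -> C,
    0 <= Re (csum n (fun i => Cmul (Cconj (v i))
                               (csum n (fun j => Cmul (A i j) (v j))))).
Definition density (n : nat) (A : Mat) : Prop :=
  hermitian n A /\ psd n A /\ trace n A = C1.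
Definition pure_state (n : nat) (A : Mat) : Prop :=
  density n A /\
  exists v : nat -> C, forall i j, (i < n)%nat -> (j < n)%nat ->
    A i j = Cmul (v i) (Cconj (v j)).

Definition sigma_z : Mat := fun i j =>
  match i, j with O, O => C1 | S O, S O => Copp C1 | _, _ => C0 end.
Definition sigma_p : Mat := fun i j =>
  match i, j with S O, O => C1 | _, _ => C0 end.
Definition sigma_m : Mat := fun i j =>
  match i, j with O, S O => C1 | _, _ => C0 end.

Definition comm2 (A B : Mat) : Mat := msub (mmul 2 A B) (mmul 2 B A).
Definition acomm2 (A B : Mat) : Mat := madd (mmul 2 A B) (mmul 2 B A).

Definition lindblad (w : R) (r : Mat) : Mat :=
  madd (mscale (Cmul (Copp Ci) (RtoC (w / 2))) (comm2 sigma_z r))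
  (madd (msub (mmul 2 (mmul 2 sigma_m r) sigma_p)
              (mscale (RtoC (1/2)) (acomm2 (mmul 2 sigma_p sigma_m) r)))
        (msub (mmul 2 (mmul 2 sigma_p r) sigma_m)
              (mscale (RtoC (1/2)) (acomm2 (mmul 2 sigma_m sigma_p) r)))).

Definition chan_out (w T : R) (X Y : Mat) : Prop :=
  exists rho : R -> Mat,
    (forall i j, (i < 2)%nat -> (j < 2)%nat -> rho 0 i j = X i j) /\
    (forall t i j, (i < 2)%nat -> (j < 2)%nat ->
       derivable_pt_lim (fun s => Re (rho s i j)) t (Re (lindblad w (rho t) i j)) /\
       derivable_pt_lim (fun s => Im (rho s i j)) t (Im (lindblad w (rho t) i j))) /\
    (forall i j, (i < 2)%nat -> (j < 2)%nat -> rho T i j = Y i j).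

(* X (x) Z with dim Z = m; basis |a>|b> has index a*m + b.
   chan_ext_out w T m xi Y : Y = (Phi_T (x) 1_{L(Z)})(xi), computed blockwise:
   (Phi (x) 1)(sum_{b,b'} X_{bb'} (x) |b><b'|) = sum Phi(X_{bb'}) (x) |b><b'|. *)
Definition chan_ext_out (w T : R) (m : nat) (xi Y : Mat) : Prop :=
  exists Yb : nat -> nat -> Mat,
    (forall b b', (b < m)%nat -> (b' < m)%nat ->
       chan_out w T (fun a a' => xi (a * m + b)%nat (a' * m + b')%nat) (Yb b b')) /\
    (forall a a' b b', (a < 2)%nat -> (a' < 2)%nat -> (b < m)%nat -> (b' < m)%nat ->
       Y (a * m + b)%nat (a' * m + b')%nat = Yb b b' a a').

Definition ptrace_Z (m : nat) (xi : Mat) : Mat :=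
  fun a a' => csum m (fun b => xi (a * m + b)%nat (a' * m + b)%nat).

Definition superfid (n : nat) (A B : Mat) : R :=
  Re (trace n (mmul n A B))
  + sqrt (1 - Re (trace n (mmul n A A))) * sqrt (1 - Re (trace n (mmul n B B))).

Definition Gch_values (w0 w1 T : R) (sigma : Mat) (g : R) : Prop :=
  exists (m : nat) (xi Y0 Y1 : Mat),
    pure_state (2 * m) xi /\
    (forall a a', (a < 2)%nat -> (a' < 2)%nat -> ptrace_Z m xi a a' = sigma a a') /\
    chan_ext_out w0 T m xi Y0 /\ chan_ext_out w1 T m xi Y1 /\
    g = superfid (2 * m) Y0 Y1.

Definition is_inf (S : R -> Prop) (x : R) : Prop :=
  (forall g, S g -> x <= g) /\ (forall y, (forall g, S g -> y <= g) -> y <= x).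

Definition channel_superfidelity_is (Omega eps0 eps1 T : R) (sigma : Mat) (x : R) : Prop :=
  is_inf (Gch_values (Omega + eps0) (Omega + eps1) T sigma) x.

(* The Lindblad equation decouples entrywise: the populations relax to their
   mean at rate 2 and the coherences decay at rate 1 while rotating at the
   frequency [w = Omega + eps], which gives [Phi_T] in closed form.  For a
   purification [xi = |v><v|] of [rho], [Tr((Phi (x) 1) xi (Psi (x) 1) xi)] is
   then a quadratic expression in the entries of the reduced state [rho] alone,
   so every purification yields the same superfidelity, which is therefore the
   infimum.  Both outputs have the same purity (the phase does not affect the
   moduli), so the square-root term equals [1 - Tr(Y0^2)], and
   [Tr(Y0 Y1) - Tr(Y0^2) = -2 e^{-2T} (1 - cos (eps T)) rho00 rho11]. *)

From Pilot Require Import Defs.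
From Stdlib Require Import Reals Lra Lia Psatz.
Open Scope R_scope.

Lemma C_eq (z w : Defs.C) : Re z = Re w -> Im z = Im w -> z = w.
Proof. destruct z, w; simpl; intros; subst; reflexivity. Qed.

Section LindbladEntries.
Variables (w : R) (r : Mat).

Ltac unfold_lindblad :=
  unfold lindblad, madd, msub, mscale, mmul, comm2, acomm2, sigma_z, sigma_p, sigma_m; simpl.

Lemma lindblad_00 :
  Re (lindblad w r 0%nat 0%nat) = Re (r 1%nat 1%nat) - Re (r 0%nat 0%nat) /\
  Im (lindblad w r 0%nat 0%nat) = Im (r 1%nat 1%nat) - Im (r 0%nat 0%nat).
Proof. unfold_lindblad; split; lra. Qed.

Lemma lindblad_11 :
  Re (lindblad w r 1%nat 1%nat) = Re (r 0%nat 0%nat) - Re (r 1%nat 1%nat) /\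
  Im (lindblad w r 1%nat 1%nat) = Im (r 0%nat 0%nat) - Im (r 1%nat 1%nat).
Proof. unfold_lindblad; split; field. Qed.

Lemma lindblad_01 :
  Re (lindblad w r 0%nat 1%nat) = - Re (r 0%nat 1%nat) + w * Im (r 0%nat 1%nat) /\
  Im (lindblad w r 0%nat 1%nat) = - Im (r 0%nat 1%nat) - w * Re (r 0%nat 1%nat).
Proof. unfold_lindblad; split; field. Qed.

Lemma lindblad_10 :
  Re (lindblad w r 1%nat 0%nat) = - Re (r 1%nat 0%nat) + (- w) * Im (r 1%nat 0%nat) /\
  Im (lindblad w r 1%nat 0%nat) = - Im (r 1%nat 0%nat) - (- w) * Re (r 1%nat 0%nat).
Proof. unfold_lindblad; split; field. Qed.

End LindbladEntries.

Lemma dlim_eq f x l l' : l = l' -> derivable_pt_lim f x l -> derivable_pt_lim f x l'.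
Proof. intros ->; auto. Qed.

Lemma dlim_plus f g t df dg : derivable_pt_lim f t df -> derivable_pt_lim g t dg ->
  derivable_pt_lim (fun s => f s + g s) t (df + dg).
Proof. exact (derivable_pt_lim_plus f g t df dg). Qed.

Lemma dlim_minus f g t df dg : derivable_pt_lim f t df -> derivable_pt_lim g t dg ->
  derivable_pt_lim (fun s => f s - g s) t (df - dg).
Proof. exact (derivable_pt_lim_minus f g t df dg). Qed.

Lemma dlim_mult f g t df dg : derivable_pt_lim f t df -> derivable_pt_lim g t dg ->
  derivable_pt_lim (fun s => f s * g s) t (df * g t + f t * dg).
Proof. exact (derivable_pt_lim_mult f g t df dg). Qed.

Lemma dlim_const a t : derivable_pt_lim (fun _ => a) t 0.
Proof. exact (derivable_pt_lim_const a t). Qed.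

Lemma dlim_scal_id c t : derivable_pt_lim (fun s => c * s) t c.
Proof.
  apply (dlim_eq _ _ (c * 1)); [ring|].
  exact (derivable_pt_lim_scal id c t 1 (derivable_pt_lim_id t)).
Qed.

Lemma dlim_exp_scal c t : derivable_pt_lim (fun s => exp (c * s)) t (c * exp (c * t)).
Proof.
  apply (dlim_eq _ _ (exp (c * t) * c)); [ring|].
  exact (derivable_pt_lim_comp _ exp t _ _ (dlim_scal_id c t) (derivable_pt_lim_exp _)).
Qed.

Lemma dlim_cos_scal c t : derivable_pt_lim (fun s => cos (c * s)) t (- c * sin (c * t)).
Proof.
  apply (dlim_eq _ _ (- sin (c * t) * c)); [ring|].
  exact (derivable_pt_lim_comp _ cos t _ _ (dlim_scal_id c t) (derivable_pt_lim_cos _)).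
Qed.

Lemma dlim_sin_scal c t : derivable_pt_lim (fun s => sin (c * s)) t (c * cos (c * t)).
Proof.
  apply (dlim_eq _ _ (cos (c * t) * c)); [ring|].
  exact (derivable_pt_lim_comp _ sin t _ _ (dlim_scal_id c t) (derivable_pt_lim_sin _)).
Qed.

Ltac derive := repeat first [ apply dlim_minus | apply dlim_plus | apply dlim_mult
  | apply dlim_const | apply dlim_exp_scal | apply dlim_cos_scal | apply dlim_sin_scal ].

Lemma zero_derivative_const f T : (forall t, derivable_pt_lim f t 0) -> f T = f 0.
Proof.
  intros Hf.
  exact (null_derivative_1 f (fun x => exist _ 0 (Hf x)) (fun x => eq_refl) T 0).
Qed.

(* Each solution is pinned down by a quantity with zero derivative. *)

Lemma ode_exp_growth f k T :
  (forall t, derivable_pt_lim f t (k * f t)) -> f T = f 0 * exp (k * T).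
Proof.
  intros Hf.
  assert (Hc : f T * exp (- k * T) = f 0 * exp (- k * 0)).
  { apply (zero_derivative_const (fun s => f s * exp (- k * s))). intro t.
    eapply dlim_eq; [| apply dlim_mult; [apply Hf | apply dlim_exp_scal]]. cbv beta; ring. }
  rewrite Rmult_0_r, exp_0, Rmult_1_r in Hc.
  rewrite <- Hc, Rmult_assoc, <- exp_plus.
  replace (- k * T + k * T) with 0 by ring. rewrite exp_0; ring.
Qed.

Lemma ode_exchange f g T :
  (forall t, derivable_pt_lim f t (g t - f t)) ->
  (forall t, derivable_pt_lim g t (f t - g t)) ->
  f T = (f 0 + g 0) / 2 + (f 0 - g 0) / 2 * exp (-2 * T) /\
  g T = (f 0 + g 0) / 2 - (f 0 - g 0) / 2 * exp (-2 * T).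
Proof.
  intros Hf Hg.
  assert (Hsum : f T + g T = f 0 + g 0).
  { apply (zero_derivative_const (fun s => f s + g s)). intro t.
    eapply dlim_eq; [| apply dlim_plus; [apply Hf | apply Hg]]. ring. }
  assert (Hdiff : f T - g T = (f 0 - g 0) * exp (-2 * T)).
  { apply (ode_exp_growth (fun s => f s - g s)). intro t.
    eapply dlim_eq; [| apply dlim_minus; [apply Hf | apply Hg]]. ring. }
  split; lra.
Qed.

Lemma ode_damped_rotation x y w T :
  (forall t, derivable_pt_lim x t (- x t + w * y t)) ->
  (forall t, derivable_pt_lim y t (- y t - w * x t)) ->
  x T = exp (-1 * T) * (x 0 * cos (w * T) + y 0 * sin (w * T)) /\
  y T = exp (-1 * T) * (y 0 * cos (w * T) - x 0 * sin (w * T)).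
Proof.
  intros Hx Hy.
  (* [e^t R(wt)(x, y)] is constant, where [R] is the rotation by angle [wt] *)
  assert (Hc : exp (1 * T) * (x T * cos (w * T) - y T * sin (w * T)) =
            exp (1 * 0) * (x 0 * cos (w * 0) - y 0 * sin (w * 0))).
  { apply (zero_derivative_const
      (fun s => exp (1 * s) * (x s * cos (w * s) - y s * sin (w * s)))). intro t.
    eapply dlim_eq; [| apply dlim_mult; [apply dlim_exp_scal | apply dlim_minus;
      apply dlim_mult; [apply Hx | apply dlim_cos_scal | apply Hy | apply dlim_sin_scal]]].
    cbv beta; ring. }
  assert (Hs : exp (1 * T) * (x T * sin (w * T) + y T * cos (w * T)) =
            exp (1 * 0) * (x 0 * sin (w * 0) + y 0 * cos (w * 0))).
  { apply (zero_derivative_const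
      (fun s => exp (1 * s) * (x s * sin (w * s) + y s * cos (w * s)))). intro t.
    eapply dlim_eq; [| apply dlim_mult; [apply dlim_exp_scal | apply dlim_plus;
      apply dlim_mult; [apply Hx | apply dlim_sin_scal | apply Hy | apply dlim_cos_scal]]].
    cbv beta; ring. }
  rewrite !Rmult_0_r, exp_0, cos_0, sin_0 in Hc, Hs.
  assert (He : exp (-1 * T) * exp (1 * T) = 1).
  { rewrite <- exp_plus. replace (-1 * T + 1 * T) with 0 by ring. apply exp_0. }
  pose proof (sin2_cos2 (w * T)) as Hcs. unfold Rsqr in Hcs.
  replace (x 0) with (exp (1 * T) * (x T * cos (w * T) - y T * sin (w * T))) by lra.
  replace (y 0) with (exp (1 * T) * (x T * sin (w * T) + y T * cos (w * T))) by lra.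
  split.
  - transitivity (x T * (exp (-1 * T) * exp (1 * T)) *
                  (sin (w * T) * sin (w * T) + cos (w * T) * cos (w * T))); [|ring].
    rewrite He, Hcs; ring.
  - transitivity (y T * (exp (-1 * T) * exp (1 * T)) *
                  (sin (w * T) * sin (w * T) + cos (w * T) * cos (w * T))); [|ring].
    rewrite He, Hcs; ring.
Qed.

Definition lindblad_sol (w : R) (X : Mat) (t : R) : Mat := fun i j =>
  let p := (Re (X 0%nat 0%nat) + Re (X 1%nat 1%nat)) / 2 in
  let p' := (Im (X 0%nat 0%nat) + Im (X 1%nat 1%nat)) / 2 in
  let q := (Re (X 0%nat 0%nat) - Re (X 1%nat 1%nat)) / 2 * exp (-2 * t) in
  let q' := (Im (X 0%nat 0%nat) - Im (X 1%nat 1%nat)) / 2 * exp (-2 * t) in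
  match i, j with
  | O, O => mkC (p + q) (p' + q')
  | S O, S O => mkC (p - q) (p' - q')
  | O, S O =>
      mkC (exp (-1 * t) * (Re (X 0%nat 1%nat) * cos (w * t) + Im (X 0%nat 1%nat) * sin (w * t)))
          (exp (-1 * t) * (Im (X 0%nat 1%nat) * cos (w * t) - Re (X 0%nat 1%nat) * sin (w * t)))
  | S O, O =>
      mkC (exp (-1 * t) * (Re (X 1%nat 0%nat) * cos (- w * t) + Im (X 1%nat 0%nat) * sin (- w * t)))
          (exp (-1 * t) * (Im (X 1%nat 0%nat) * cos (- w * t) - Re (X 1%nat 0%nat) * sin (- w * t)))
  | _, _ => Defs.C0
  end.

Lemma chan_out_lindblad_sol w T X : chan_out w T X (lindblad_sol w X T).
Proof.
  exists (lindblad_sol w X). split; [|split].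
  - intros i j Hi Hj.
    destruct i as [|[|i]]; [| |lia]; destruct j as [|[|j]]; try lia; apply C_eq; simpl;
      rewrite ?Rmult_0_r, ?exp_0, ?cos_0, ?sin_0; field.
  - intros t i j Hi Hj.
    destruct i as [|[|i]]; [| |lia]; destruct j as [|[|j]]; try lia.
    + rewrite (proj1 (lindblad_00 _ _)), (proj2 (lindblad_00 _ _)); simpl.
      split; (eapply dlim_eq; [|derive]); cbv beta; field.
    + rewrite (proj1 (lindblad_01 _ _)), (proj2 (lindblad_01 _ _)); simpl.
      split; (eapply dlim_eq; [|derive]); cbv beta; ring.
    + rewrite (proj1 (lindblad_10 _ _)), (proj2 (lindblad_10 _ _)); simpl.
      split; (eapply dlim_eq; [|derive]); cbv beta; ring.
    + rewrite (proj1 (lindblad_11 _ _)), (proj2 (lindblad_11 _ _)); simpl.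
      split; (eapply dlim_eq; [|derive]); cbv beta; field.
  - reflexivity.
Qed.

Lemma chan_out_unique w T X Y : chan_out w T X Y ->
  forall i j, (i < 2)%nat -> (j < 2)%nat -> Y i j = lindblad_sol w X T i j.
Proof.
  intros [rho [H0 [HD HT]]] i j Hi Hj.
  rewrite <- HT by assumption.
  pose proof (fun t => HD t 0%nat 0%nat ltac:(lia) ltac:(lia)) as D00.
  pose proof (fun t => HD t 1%nat 1%nat ltac:(lia) ltac:(lia)) as D11.
  pose proof (fun t => HD t 0%nat 1%nat ltac:(lia) ltac:(lia)) as D01.
  pose proof (fun t => HD t 1%nat 0%nat ltac:(lia) ltac:(lia)) as D10.
  assert (Hre : forall t,
    derivable_pt_lim (fun s => Re (rho s 0%nat 0%nat)) t
      (Re (rho t 1%nat 1%nat) - Re (rho t 0%nat 0%nat)) /\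
    derivable_pt_lim (fun s => Re (rho s 1%nat 1%nat)) t
      (Re (rho t 0%nat 0%nat) - Re (rho t 1%nat 1%nat))).
  { intro t. rewrite <- (proj1 (lindblad_00 w _)), <- (proj1 (lindblad_11 w _)).
    split; [apply D00 | apply D11]. }
  assert (Him : forall t,
    derivable_pt_lim (fun s => Im (rho s 0%nat 0%nat)) t
      (Im (rho t 1%nat 1%nat) - Im (rho t 0%nat 0%nat)) /\
    derivable_pt_lim (fun s => Im (rho s 1%nat 1%nat)) t
      (Im (rho t 0%nat 0%nat) - Im (rho t 1%nat 1%nat))).
  { intro t. rewrite <- (proj2 (lindblad_00 w _)), <- (proj2 (lindblad_11 w _)).
    split; [apply D00 | apply D11]. }
  destruct (ode_exchange _ _ T (fun t => proj1 (Hre t)) (fun t => proj2 (Hre t)))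
    as [E00 E11].
  destruct (ode_exchange _ _ T (fun t => proj1 (Him t)) (fun t => proj2 (Him t)))
    as [F00 F11].
  destruct (ode_damped_rotation (fun s => Re (rho s 0%nat 1%nat)) (fun s => Im (rho s 0%nat 1%nat)) w T)
    as [E01 F01].
  { intro t. rewrite <- (proj1 (lindblad_01 w _)). apply D01. }
  { intro t. rewrite <- (proj2 (lindblad_01 w _)). apply D01. }
  destruct (ode_damped_rotation (fun s => Re (rho s 1%nat 0%nat)) (fun s => Im (rho s 1%nat 0%nat)) (- w) T)
    as [E10 F10].
  { intro t. rewrite <- (proj1 (lindblad_10 w _)). apply D10. }
  { intro t. rewrite <- (proj2 (lindblad_10 w _)). apply D10. }
  cbv beta in *.
  destruct i as [|[|i]]; [| |lia]; destruct j as [|[|j]]; try lia; apply C_eq; simpl;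
    rewrite <- ?(H0 0%nat 0%nat), <- ?(H0 1%nat 1%nat), <- ?(H0 0%nat 1%nat),
      <- ?(H0 1%nat 0%nat) by lia; assumption.
Qed.

Fixpoint rsum (n : nat) (f : nat -> R) : R :=
  match n with O => 0 | S k => rsum k f + f k end.

Lemma rsum_ext n f g : (forall k, (k < n)%nat -> f k = g k) -> rsum n f = rsum n g.
Proof. induction n; simpl; intros H; auto. rewrite IHn, H; auto. Qed.

Lemma rsum_add n f g : rsum n (fun k => f k + g k) = rsum n f + rsum n g.
Proof. induction n; simpl; [ring|]. rewrite IHn; ring. Qed.

Lemma rsum_opp n f : rsum n (fun k => - f k) = - rsum n f.
Proof. induction n; simpl; [ring|]. rewrite IHn; ring. Qed.

Lemma rsum_lincomb m (f1 f2 f3 f4 : nat -> R) c1 c2 c3 x1 x2 x3 x4 :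
  rsum m (fun k => c1 * (x1 * f1 k + x2 * f2 k) + c2 * (x3 * f3 k + x4 * f4 k)
                   + c3 * (x1 * f2 k + x2 * f1 k)) =
  c1 * (x1 * rsum m f1 + x2 * rsum m f2) + c2 * (x3 * rsum m f3 + x4 * rsum m f4)
  + c3 * (x1 * rsum m f2 + x2 * rsum m f1).
Proof. induction m; simpl; [ring|]. rewrite IHm; ring. Qed.

Lemma rsum2_quadratic m (f1 f2 f3 f4 : nat -> R) c1 c2 c3 :
  rsum m (fun b => rsum m (fun b' =>
    c1 * (f1 b * f1 b' + f2 b * f2 b') + c2 * (f3 b * f3 b' + f4 b * f4 b')
    + c3 * (f1 b * f2 b' + f2 b * f1 b'))) =
  c1 * (rsum m f1 * rsum m f1 + rsum m f2 * rsum m f2)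
  + c2 * (rsum m f3 * rsum m f3 + rsum m f4 * rsum m f4)
  + c3 * (2 * (rsum m f1 * rsum m f2)).
Proof.
  rewrite (rsum_ext m _ (fun b =>
    c1 * (rsum m f1 * f1 b + rsum m f2 * f2 b) + c2 * (rsum m f3 * f3 b + rsum m f4 * f4 b)
    + c3 * (rsum m f1 * f2 b + rsum m f2 * f1 b))).
  - rewrite (rsum_lincomb m f1 f2 f3 f4 c1 c2 c3). ring.
  - intros b _. rewrite (rsum_lincomb m f1 f2 f3 f4 c1 c2 c3 (f1 b) (f2 b) (f3 b) (f4 b)).
    ring.
Qed.

Lemma csum_ext n f g : (forall k, (k < n)%nat -> f k = g k) -> csum n f = csum n g.
Proof. induction n; simpl; intros H; auto. rewrite IHn, H; auto. Qed.

Lemma Re_csum n f : Re (csum n f) = rsum n (fun k => Re (f k)).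
Proof. induction n; simpl; auto. rewrite IHn; auto. Qed.

Lemma Im_csum n f : Im (csum n f) = rsum n (fun k => Im (f k)).
Proof. induction n; simpl; auto. rewrite IHn; auto. Qed.

Lemma csum_mul_l c n f : csum n (fun k => Cmul c (f k)) = Cmul c (csum n f).
Proof. induction n; simpl; [|rewrite IHn]; apply C_eq; simpl; ring. Qed.

Lemma csum_mul_r c n f : csum n (fun k => Cmul (f k) c) = Cmul (csum n f) c.
Proof. induction n; simpl; [|rewrite IHn]; apply C_eq; simpl; ring. Qed.

Lemma csum_double m f :
  csum (2 * m)%nat f = Cadd (csum m f) (csum m (fun k => f (m + k)%nat)).
Proof.
  replace (2 * m)%nat with (m + m)%nat by lia.
  generalize m at 2 4. intro n. induction n; simpl.
  - rewrite Nat.add_0_r. apply C_eq; simpl; ring.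
  - rewrite Nat.add_succ_r. simpl. rewrite IHn. apply C_eq; simpl; ring.
Qed.

Lemma Re_Cadd z w : Re (Cadd z w) = Re z + Re w.
Proof. reflexivity. Qed.

Lemma Re_trace_mmul_double m A B :
  Re (trace (2 * m)%nat (mmul (2 * m)%nat A B)) =
  rsum m (fun b => rsum m (fun b' =>
      Re (Cmul (A b b') (B b' b)) + Re (Cmul (A b (m + b')%nat) (B (m + b')%nat b))
    + Re (Cmul (A (m + b)%nat b') (B b' (m + b)%nat))
    + Re (Cmul (A (m + b)%nat (m + b')%nat) (B (m + b')%nat (m + b)%nat)))).
Proof.
  unfold trace, mmul. rewrite csum_double. rewrite Re_Cadd, !Re_csum, <- rsum_add.
  apply rsum_ext. intros b _.
  rewrite !csum_double, !Re_Cadd, !Re_csum, <- !rsum_add.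
  apply rsum_ext. intros; ring.
Qed.

Lemma qubit_density_entries rho : density 2 rho ->
  Im (rho 0%nat 0%nat) = 0 /\ Im (rho 1%nat 1%nat) = 0 /\
  Re (rho 1%nat 0%nat) = Re (rho 0%nat 1%nat) /\ Im (rho 1%nat 0%nat) = - Im (rho 0%nat 1%nat) /\
  Re (rho 0%nat 0%nat) + Re (rho 1%nat 1%nat) = 1 /\
  0 <= Re (rho 0%nat 0%nat) /\ 0 <= Re (rho 1%nat 1%nat) /\
  Re (rho 0%nat 1%nat) ^ 2 + Im (rho 0%nat 1%nat) ^ 2 <= Re (rho 0%nat 0%nat) * Re (rho 1%nat 1%nat).
Proof.
  intros [Hh [Hp Ht]].
  pose proof (Hh 0%nat 0%nat ltac:(lia) ltac:(lia)) as H00.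
  pose proof (Hh 1%nat 1%nat ltac:(lia) ltac:(lia)) as H11.
  pose proof (Hh 1%nat 0%nat ltac:(lia) ltac:(lia)) as H10.
  apply (f_equal Im) in H00, H11. apply (f_equal Re) in Ht.
  pose proof (f_equal Re H10) as R10. apply (f_equal Im) in H10.
  unfold trace in Ht. simpl in H00, H11, H10, R10, Ht.
  assert (P := fun a b => Hp (fun i => match i with O => a | _ => b end)).
  (* the determinant bound comes from testing psd on [(d, -rho10)] and [(-rho01, a)] *)
  pose proof (P Defs.C1 Defs.C0) as Pa. pose proof (P Defs.C0 Defs.C1) as Pd.
  pose proof (P (RtoC (Re (rho 1%nat 1%nat))) (Copp (rho 1%nat 0%nat))) as P1.
  pose proof (P (Copp (rho 0%nat 1%nat)) (RtoC (Re (rho 0%nat 0%nat)))) as P2.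
  simpl in Pa, Pd, P1, P2.
  replace (Im (rho 0%nat 0%nat)) with 0 in * by lra.
  replace (Im (rho 1%nat 1%nat)) with 0 in * by lra.
  replace (Re (rho 1%nat 0%nat)) with (Re (rho 0%nat 1%nat)) in * by lra.
  replace (Im (rho 1%nat 0%nat)) with (- Im (rho 0%nat 1%nat)) in * by lra.
  repeat split; try lra; nra.
Qed.

Lemma psd_outer n (v : nat -> Defs.C) : psd n (fun i j => Cmul (v i) (Cconj (v j))).
Proof.
  intro z.
  set (G := csum n (fun j => Cmul (Cconj (v j)) (z j))).
  set (W := csum n (fun i => Cmul (Cconj (z i)) (v i))).
  assert (HG : csum n (fun i => Cmul (Cconj (z i))
                 (csum n (fun j => Cmul (Cmul (v i) (Cconj (v j))) (z j)))) = Cmul W G).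
  { unfold W. rewrite <- csum_mul_r. apply csum_ext. intros i _.
    unfold G. rewrite <- !csum_mul_l. apply csum_ext. intros.
    apply C_eq; simpl; ring. }
  (* [G] is the complex conjugate of [W], so [W G = |W|^2] *)
  assert (HR : Re G = Re W).
  { unfold G, W. rewrite !Re_csum. apply rsum_ext. intros; simpl; ring. }
  assert (HI : Im G = - Im W).
  { unfold G, W. rewrite !Im_csum, <- rsum_opp. apply rsum_ext. intros; simpl; ring. }
  rewrite HG. simpl. rewrite HR, HI. nra.
Qed.

Lemma outer_pure_state m (v : nat -> Defs.C) rho :
  density 2 rho ->
  (forall a a', (a < 2)%nat -> (a' < 2)%nat ->
     ptrace_Z m (fun i j => Cmul (v i) (Cconj (v j))) a a' = rho a a') ->
  pure_state (2 * m) (fun i j => Cmul (v i) (Cconj (v j))).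
Proof.
  intros Hd Hpt.
  destruct (qubit_density_entries rho Hd) as (I00 & I11 & _ & _ & Tr & _).
  split; [split; [|split]|].
  - intros i j _ _. apply C_eq; simpl; ring.
  - apply psd_outer.
  - transitivity (Cadd (ptrace_Z m (fun i j => Cmul (v i) (Cconj (v j))) 0%nat 0%nat)
                        (ptrace_Z m (fun i j => Cmul (v i) (Cconj (v j))) 1%nat 1%nat)).
    + unfold trace, ptrace_Z. rewrite csum_double. f_equal.
      apply csum_ext. intros. rewrite Nat.mul_1_l. reflexivity.
    + rewrite !Hpt by lia. apply C_eq; simpl; lra.
  - exists v. reflexivity.
Qed.

(* Cholesky factorisation: the entry of [v] at index [2 a + b] is entry [a] of
   column [b] of a triangular square root of [rho] (separately when [rho_00 = 0]). *)
Lemma qubit_purification rho : density 2 rho -> exists v : nat -> Defs.C,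
  forall a a', (a < 2)%nat -> (a' < 2)%nat ->
    ptrace_Z 2 (fun i j => Cmul (v i) (Cconj (v j))) a a' = rho a a'.
Proof.
  intros Hd.
  destruct (qubit_density_entries rho Hd) as (I00 & I11 & R10 & J10 & Tr & Pa & Pd & Ps).
  set (a := Re (rho 0%nat 0%nat)) in *. set (d := Re (rho 1%nat 1%nat)) in *.
  set (x := Re (rho 0%nat 1%nat)) in *. set (y := Im (rho 0%nat 1%nat)) in *.
  destruct (Req_dec a 0) as [Ha0 | Ha0].
  - assert (Hx : x = 0) by nra. assert (Hy : y = 0) by nra.
    exists (fun i => match i with 2%nat => Defs.C1 | _ => Defs.C0 end).
    intros i j Hi Hj.
    destruct i as [|[|i]]; [| |lia]; destruct j as [|[|j]]; try lia; apply C_eq;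
      unfold ptrace_Z; simpl; fold a d x y; rewrite ?I00, ?I11, ?R10, ?J10; fold x y; lra.
  - set (sa := sqrt a).
    assert (Hsa : sa * sa = a) by (apply sqrt_sqrt; lra).
    assert (Hsap : 0 < sa) by (apply sqrt_lt_R0; lra).
    assert (Hr : 0 <= d - (x ^ 2 + y ^ 2) / a).
    { replace (d - (x ^ 2 + y ^ 2) / a) with ((a * d - (x ^ 2 + y ^ 2)) * / a) by (field; lra).
      apply Rmult_le_pos; [lra | left; apply Rinv_0_lt_compat; lra]. }
    set (sr := sqrt (d - (x ^ 2 + y ^ 2) / a)).
    assert (Hsr : sr * sr = d - (x ^ 2 + y ^ 2) / a) by (apply sqrt_sqrt; lra).
    exists (fun i => match i with
                     | O => mkC sa 0
                     | 2%nat => mkC (x / sa) (- y / sa)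
                     | 3%nat => mkC sr 0
                     | _ => Defs.C0 end).
    intros i j Hi Hj.
    destruct i as [|[|i]]; [| |lia]; destruct j as [|[|j]]; try lia; apply C_eq;
      unfold ptrace_Z; simpl; fold a d x y; rewrite ?I00, ?I11, ?R10, ?J10; fold x y.
    all: try (field; lra).
    all: rewrite ?Hsr, ?Hsa; try (field; split; lra).
    all: rewrite <- Hsa; field; lra.
Qed.

Definition qubit_outer (u0 u1 u0' u1' : Defs.C) : Mat := fun c c' =>
  Cmul (match c with O => u0 | _ => u1 end) (Cconj (match c' with O => u0' | _ => u1' end)).

Lemma lindblad_sol_outer_trace w w' T u0 u1 u0' u1' :
  let A := lindblad_sol w (qubit_outer u0 u1 u0' u1') T in
  let B := lindblad_sol w' (qubit_outer u0' u1' u0 u1) T in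
  let E := exp (-2 * T) in
  let N z := Re (Cmul z (Cconj z)) in
  Re (Cmul (A 0%nat 0%nat) (B 0%nat 0%nat)) + Re (Cmul (A 0%nat 1%nat) (B 1%nat 0%nat))
  + Re (Cmul (A 1%nat 0%nat) (B 0%nat 1%nat)) + Re (Cmul (A 1%nat 1%nat) (B 1%nat 1%nat)) =
  (1 + E * E) / 2 * (N u0 * N u0' + N u1 * N u1')
  + (1 - E * E) * (Re (Cmul u0 (Cconj u1)) * Re (Cmul u0' (Cconj u1'))
                   + Im (Cmul u0 (Cconj u1)) * Im (Cmul u0' (Cconj u1')))
  + E * cos ((w - w') * T) * (N u0 * N u1' + N u1 * N u0').
Proof.
  intros A B E N. subst A B E N. unfold lindblad_sol, qubit_outer. simpl.
  replace (exp (-2 * T)) with (exp (-1 * T) * exp (-1 * T))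
    by (rewrite <- exp_plus; f_equal; ring).
  replace ((w - w') * T) with (w * T - w' * T) by ring.
  replace (- w * T) with (- (w * T)) by ring. replace (- w' * T) with (- (w' * T)) by ring.
  rewrite cos_minus, !cos_neg, !sin_neg.
  destruct u0 as [x0 y0], u1 as [x1 y1], u0' as [x0' y0'], u1' as [x1' y1']; simpl. field.
Qed.

Lemma lindblad_sol_ext w X X' t :
  (forall c c', (c < 2)%nat -> (c' < 2)%nat -> X c c' = X' c c') ->
  forall a a', lindblad_sol w X t a a' = lindblad_sol w X' t a a'.
Proof.
  intros H a a'. unfold lindblad_sol.
  rewrite (H 0%nat 0%nat), (H 1%nat 1%nat), (H 0%nat 1%nat), (H 1%nat 0%nat) by lia.
  reflexivity.
Qed.

Section PureInput.
Variables (m : nat) (v : nat -> Defs.C) (xi : Mat).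
Hypothesis xi_outer : forall i j, (i < 2 * m)%nat -> (j < 2 * m)%nat ->
  xi i j = Cmul (v i) (Cconj (v j)).

(* Block [(b, b')] of [xi] is [|u_b><u_b'|] with [u_b = (v_b, v_{m+b})]. *)
Lemma chan_ext_out_block w T Y : chan_ext_out w T m xi Y ->
  forall a a' b b' i j, (a < 2)%nat -> (a' < 2)%nat -> (b < m)%nat -> (b' < m)%nat ->
  i = (a * m + b)%nat -> j = (a' * m + b')%nat ->
  Y i j = lindblad_sol w (qubit_outer (v b) (v (m + b)%nat) (v b') (v (m + b')%nat)) T a a'.
Proof.
  intros [Yb [Hc HY]] a a' b b' i j Ha Ha' Hb Hb' -> ->.
  rewrite HY, (chan_out_unique _ _ _ _ (Hc b b' Hb Hb') a a' Ha Ha') by assumption.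
  apply lindblad_sol_ext. intros c c' Hc1 Hc2.
  rewrite xi_outer by nia.
  destruct c as [|[|c]]; [| |lia]; destruct c' as [|[|c']]; try lia;
    unfold qubit_outer; rewrite ?Nat.mul_0_l, ?Nat.mul_1_l, ?Nat.add_0_l; reflexivity.
Qed.

Lemma ptrace_Z_outer a a' : (a < 2)%nat -> (a' < 2)%nat ->
  ptrace_Z m xi a a' = csum m (fun b => Cmul (v (a * m + b)%nat) (Cconj (v (a' * m + b)%nat))).
Proof. intros. apply csum_ext. intros. apply xi_outer; nia. Qed.

End PureInput.

(* [Re Tr(Y Y')] for two Lindblad outputs on a purification with reduced state
   [s]; [E] is the population decay factor and [c] the cosine of the phase
   difference. *)
Definition lindblad_overlap (E c : R) (s : Mat) : R :=
  (1 + E * E) / 2 * (Re (s 0%nat 0%nat) * Re (s 0%nat 0%nat) + Re (s 1%nat 1%nat) * Re (s 1%nat 1%nat))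
  + (1 - E * E) * (Re (s 0%nat 1%nat) * Re (s 0%nat 1%nat) + Im (s 0%nat 1%nat) * Im (s 0%nat 1%nat))
  + E * c * (2 * (Re (s 0%nat 0%nat) * Re (s 1%nat 1%nat))).

Lemma Re_trace_chan_ext_pure w w' T m xi v Y Y' :
  (forall i j, (i < 2 * m)%nat -> (j < 2 * m)%nat -> xi i j = Cmul (v i) (Cconj (v j))) ->
  chan_ext_out w T m xi Y -> chan_ext_out w' T m xi Y' ->
  Re (trace (2 * m)%nat (mmul (2 * m)%nat Y Y')) =
  lindblad_overlap (exp (-2 * T)) (cos ((w - w') * T)) (ptrace_Z m xi).
Proof.
  intros Hv HY HY'.
  unfold lindblad_overlap. rewrite !(ptrace_Z_outer m v xi Hv) by lia.
  rewrite !Re_csum, Im_csum, <- rsum2_quadratic, Re_trace_mmul_double.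
  apply rsum_ext. intros b Hb. apply rsum_ext. intros b' Hb'.
  pose proof (chan_ext_out_block m v xi Hv w T Y HY) as B.
  pose proof (chan_ext_out_block m v xi Hv w' T Y' HY') as B'.
  rewrite (B 0 0 b b' b b')%nat, (B 0 1 b b' b (m + b'))%nat,
    (B 1 0 b b' (m + b) b')%nat, (B 1 1 b b' (m + b) (m + b'))%nat,
    (B' 0 0 b' b b' b)%nat, (B' 1 0 b' b (m + b') b)%nat,
    (B' 0 1 b' b b' (m + b))%nat, (B' 1 1 b' b (m + b') (m + b))%nat by lia.
  rewrite lindblad_sol_outer_trace, Nat.mul_1_l. reflexivity.
Qed.

Lemma lindblad_overlap_le_1 E rho : 0 <= E <= 1 -> density 2 rho ->
  lindblad_overlap E 1 rho <= 1.
Proof.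
  intros HE Hd.
  destruct (qubit_density_entries rho Hd) as (_ & _ & _ & _ & Tr & P0 & P1 & Ps).
  unfold lindblad_overlap.
  set (r0 := Re (rho 0%nat 0%nat)) in *. set (r1 := Re (rho 1%nat 1%nat)) in *.
  set (x := Re (rho 0%nat 1%nat)) in *. set (y := Im (rho 0%nat 1%nat)) in *.
  (* [1 - overlap] is a sum of three nonnegative terms once [1 = (r0 + r1)^2] *)
  assert (h1 : 0 <= (1 - E * E) * (r0 * r1 - (x * x + y * y))) by (apply Rmult_le_pos; nra).
  assert (h2 : 0 <= (1 - E) * (r0 * r1)) by (apply Rmult_le_pos; nra).
  assert (h3 : 0 <= (1 - E * E) * ((r0 - r1) * (r0 - r1)))
    by (apply Rmult_le_pos; [nra | apply Rle_0_sqr]).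
  apply Rle_trans with ((r0 + r1) * (r0 + r1)); [nra | rewrite Tr; lra].
Qed.

Lemma superfid_chan_ext_pure Omega eps T rho m xi Y0 Y1 :
  0 <= T -> density 2 rho -> pure_state (2 * m) xi ->
  (forall a a', (a < 2)%nat -> (a' < 2)%nat -> ptrace_Z m xi a a' = rho a a') ->
  chan_ext_out (Omega + 0) T m xi Y0 -> chan_ext_out (Omega + eps) T m xi Y1 ->
  superfid (2 * m) Y0 Y1 =
  1 - 2 * exp (- (2 * T)) * (1 - cos (eps * T)) * Re (rho 0%nat 0%nat) * Re (rho 1%nat 1%nat).
Proof.
  intros HT Hd [_ [v Hv]] Hpt H0 H1.
  unfold superfid.
  rewrite (Re_trace_chan_ext_pure _ _ T m xi v Y0 Y1 Hv H0 H1),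
    (Re_trace_chan_ext_pure _ _ T m xi v Y0 Y0 Hv H0 H0),
    (Re_trace_chan_ext_pure _ _ T m xi v Y1 Y1 Hv H1 H1).
  replace ((Omega + 0 - (Omega + eps)) * T) with (- (eps * T)) by ring.
  rewrite !Rminus_diag, Rmult_0_l, cos_0, cos_neg.
  replace (-2 * T) with (- (2 * T)) by ring.
  assert (HE : 0 <= exp (- (2 * T)) <= 1).
  { split; [left; apply exp_pos|]. rewrite <- exp_0.
    destruct (Req_dec T 0) as [-> | HT0].
    - rewrite Rmult_0_r, Ropp_0. apply Rle_refl.
    - left. apply exp_increasing. lra. }
  assert (Hovl : forall c, lindblad_overlap (exp (- (2 * T))) c (ptrace_Z m xi) =
                           lindblad_overlap (exp (- (2 * T))) c rho).
  { intro c. unfold lindblad_overlap. rewrite !Hpt by lia. reflexivity. }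
  rewrite !Hovl, sqrt_sqrt by (pose proof (lindblad_overlap_le_1 _ rho HE Hd); lra).
  unfold lindblad_overlap. ring.
Qed.

(* Index [2 a + b] encodes [|a>|b>], so block [(i mod 2, j mod 2)] holds entry [(i/2, j/2)]. *)
Definition chan_ext_sol (w T : R) (xi : Mat) : Mat := fun i j =>
  lindblad_sol w (fun c c' => xi (c * 2 + i mod 2)%nat (c' * 2 + j mod 2)%nat) T
    (i / 2)%nat (j / 2)%nat.

Lemma chan_ext_out_sol w T xi : chan_ext_out w T 2 xi (chan_ext_sol w T xi).
Proof.
  exists (fun b b' => lindblad_sol w (fun c c' => xi (c * 2 + b)%nat (c' * 2 + b')%nat) T).
  split.
  - intros b b' _ _. apply chan_out_lindblad_sol.
  - intros a a' b b' Ha Ha' Hb Hb'.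
    destruct a as [|[|]]; try lia; destruct a' as [|[|]]; try lia;
    destruct b as [|[|]]; try lia; destruct b' as [|[|]]; try lia; reflexivity.
Qed.

Theorem mainTheorem7 (Omega eps T : R) (rho : Mat) :
  0 <= T -> density 2 rho ->
  channel_superfidelity_is Omega 0 eps T rho
    (1 - 2 * exp (- (2 * T)) * (1 - cos (eps * T)) * Re (rho 0%nat 0%nat) * Re (rho 1%nat 1%nat)).
Proof.
  intros HT Hd. split.
  - intros g (m & xi & Y0 & Y1 & Hp & Hpt & H0 & H1 & ->).
    rewrite (superfid_chan_ext_pure Omega eps T rho m xi Y0 Y1 HT Hd Hp Hpt H0 H1).
    apply Rle_refl.
  - intros y Hy.
    destruct (qubit_purification rho Hd) as [v Hv].
    set (xi := fun i j => Cmul (v i) (Cconj (v j))).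
    pose proof (outer_pure_state 2 v rho Hd Hv) as Hp.
    pose proof (chan_ext_out_sol (Omega + 0) T xi) as H0.
    pose proof (chan_ext_out_sol (Omega + eps) T xi) as H1.
    rewrite <- (superfid_chan_ext_pure Omega eps T rho 2 xi _ _ HT Hd Hp Hv H0 H1).
    apply Hy. exists 2%nat, xi, (chan_ext_sol (Omega + 0) T xi), (chan_ext_sol (Omega + eps) T xi).
    exact (conj Hp (conj Hv (conj H0 (conj H1 eq_refl)))).
Qed.
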